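(* Let $(\mathcal{X},\mathbf{h})$ be an almost representable polymatroid, let $0\le\epsilon\le\mathbf{h}(\mathcal{X})$, and define $\mathbf{g}(\mathcal{A})=\min\big(\mathbf{h}(\mathcal{A}),\ \mathbf{h}(\mathcal{X})-\epsilon\big)$ for all $\mathcal{A}\subseteq\mathcal{X}$. Then $\mathbf{g}$ is almost representable.
   Context: A polymatroid $(\mathcal{X},\mathbf{h})$ is a finite ground set $\mathcal{X}=\{X_1,\dots,X_n\}$ with $\mathbf{h}:2^{\mathcal{X}}\to\mathbb{R}_{\ge0}$ satisfying $\mathbf{h}(\emptyset)=0$, monotonicity and submodularity. It is representable if for some finite field $\mathbb{F}_q$ there are subspaces $V_1,\dots,V_n$ of an $\mathbb{F}_q$-vector space with $\mathbf{h}(\{X_i:i\in\alpha\})=\dim\langle V_i:i\in\alpha\rangle$ for all $\alpha\subseteq\{1,\dots,n\}$. Rank functions are viewed as vectors in $\mathbb{R}^{2^{|\mathcal{X}|}}$. A function $\mathbf{h}$ is almost representable if $\mathbf{h}=\lim_{i\to\infty}c_i\mathbf{g}_i$ for some representable rank functions $\mathbf{g}_i$ on $\mathcal{X}$ and positive reals $c_i$. *)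

From HB Require Import structures.
From mathcomp Require Import all_boot all_order all_algebra all_field.
From mathcomp Require Import all_classical all_reals all_analysis.
Set Implicit Arguments. Unset Strict Implicit. Unset Printing Implicit Defensive.
Import Order.TTheory GRing.Theory Num.Theory.
Local Open Scope classical_set_scope.
Local Open Scope ring_scope.

(* Ground set X = {X_1,...,X_n} is modelled by 'I_n; subsets by {set 'I_n}.
   Rank functions are functions {set 'I_n} -> R. *)

Definition polymatroid (R : realType) (n : nat) (h : {set 'I_n} -> R) : Prop :=
  [/\ h finset.set0 = 0,
      (forall A, 0 <= h A),
      (forall A B : {set 'I_n}, A \subset B -> h A <= h B) &
      (forall A B : {set 'I_n}, h (A :|: B) + h (A :&: B) <= h A + h B)].

Definition representable (R : realType) (n : nat) (h : {set 'I_n} -> R) : Prop :=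
  exists (F : finFieldType) (vT : vectType F) (V : 'I_n -> {vspace vT}),
    forall A : {set 'I_n}, h A = (\dim (\sum_(i in A) V i)%VS)%:R.

(* h = lim c_i g_i in R^(2^n) (coordinatewise convergence, equivalent to
   convergence in the finite-dimensional space R^(2^n)). *)
Definition almost_representable (R : realType) (n : nat)
    (h : {set 'I_n} -> R) : Prop :=
  exists (g : nat -> {set 'I_n} -> R) (c : nat -> R),
    [/\ (forall k, representable (g k)),
        (forall k, 0 < c k) &
        (forall A : {set 'I_n}, c k * g k A @[k --> \oo] --> (h A : R^o))].

From HB Require Import structures.
From mathcomp Require Import all_boot all_order all_algebra all_field.
From mathcomp Require Import all_classical all_reals all_analysis.
From mathcomp Require Import zify.
Import Order.TTheory GRing.Theory Num.Theory.
Set Implicit Arguments. Unset Strict Implicit. Unset Printing Implicit Defensive.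
Local Open Scope ring_scope.

(* Over a field with more elements than there are subsets of the ground set,
   representable rank functions are closed under truncation: projecting along
   a vector of the total space that avoids every span of smaller rank lowers
   the total rank by one and caps every other rank at it. They are also closed
   under multiplication by an integer (block-diagonal sums), and any finite
   field embeds in an arbitrarily large one. Given representable [g_k] with
   [c_k g_k --> h], choose integers [m_k] with [a_k = c_k / m_k --> 0] and
   truncate [m_k g_k] at [r_k = floor (t / a_k)], where [t = h X - eps]; then
   [a_k min (m_k g_k, r_k) = min (c_k g_k, a_k r_k) --> min (h, t)]. *)

Definition mx_representable {n : nat} (f : {set 'I_n} -> nat) :=
  exists (F : finFieldType) (d : nat) (M : 'I_n -> 'M[F]_d),
    forall A : {set 'I_n}, \rank (\sum_(i in A) M i)%MS = f A.

Section VectorSpaceMatrix.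
Import VectorInternalTheory.

Lemma dimv_sumv (F : fieldType) (vT : vectType F) (I : finType) (P : pred I)
    (V : I -> {vspace vT}) :
  \dim (\sum_(i | P i) V i)%VS = \rank (\sum_(i | P i) vs2mx (V i))%MS.
Proof.
have vs2mxD (U W : {vspace vT}) : vs2mx (U + W)%VS = (vs2mx U + vs2mx W)%MS.
  by rewrite /= genmx_adds !gen_vs2mx.
have vs2mx0 : vs2mx (0%VS : {vspace vT}) = 0 by rewrite /= linear0 genmx0.
by rewrite /dimv (big_morph _ vs2mxD vs2mx0).
Qed.

Lemma representable_mx (R : realType) n (h : {set 'I_n} -> R) :
  representable h ->
  exists f : {set 'I_n} -> nat, mx_representable f /\ h = (fun A => (f A)%:R).
Proof.
move=> [F [vT [V hV]]]; exists (fun A : {set 'I_n} => \dim (\sum_(i in A) V i)%VS).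
split; first by exists F, (dim vT), (fun i => vs2mx (V i)) => A; rewrite dimv_sumv.
by apply: funext => A; rewrite hV.
Qed.

Lemma mx_representable_representable (R : realType) n (f : {set 'I_n} -> nat) :
  mx_representable f -> representable (fun A => (f A)%:R : R).
Proof.
move=> [F [d [M fM]]]; pose vT := 'rV[F]_d.
have dim_vT : dim vT = d by rewrite dim_matrix mul1r.
move: M fM; rewrite -dim_vT => M fM.
exists F, vT, (fun i => mx2vs (M i)) => A.
by rewrite -fM dimv_sumv (eqmx_sums (fun i _ => mx2vsK (M i))).
Qed.

End VectorSpaceMatrix.

Section BlockDiagonal.
Variable F : fieldType.

Lemma block_diag_submx m1 m2 m3 m4 d1 d2 (X : 'M[F]_(m1, d1)) (Y : 'M[F]_(m2, d2))
    (X' : 'M[F]_(m3, d1)) (Y' : 'M[F]_(m4, d2)) :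
  (X <= X')%MS -> (Y <= Y')%MS -> (block_mx X 0 0 Y <= block_mx X' 0 0 Y')%MS.
Proof.
move=> /submxP[P ->] /submxP[Q ->].
have -> : block_mx (P *m X') 0 0 (Q *m Y') = block_mx P 0 0 Q *m block_mx X' 0 0 Y'.
  by rewrite mulmx_block !mulmx0 !mul0mx !addr0 !add0r.
exact: submxMl.
Qed.

Lemma addsmx_block_diag m1 m2 m3 m4 d1 d2 (A : 'M[F]_(m1, d1)) (B : 'M[F]_(m2, d2))
    (X : 'M[F]_(m3, d1)) (Y : 'M[F]_(m4, d2)) :
  (block_mx A 0 0 B + block_mx X 0 0 Y :=: block_mx (A + X)%MS 0 0 (B + Y)%MS)%MS.
Proof.
have rowl_sub m3' m4' (U : 'M[F]_(m3', d1)) (V : 'M[F]_(m4', d2)) :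
    (U *m row_mx 1%:M 0 <= block_mx U 0 0 V)%MS.
  by rewrite mul_mx_row mulmx1 mulmx0 block_mxEv -addsmxE addsmxSl.
have rowr_sub m3' m4' (U : 'M[F]_(m3', d1)) (V : 'M[F]_(m4', d2)) :
    (V *m row_mx 0 1%:M <= block_mx U 0 0 V)%MS.
  by rewrite mul_mx_row mulmx1 mulmx0 block_mxEv -addsmxE addsmxSr.
apply/eqmxP/andP; split.
  by rewrite addsmx_sub !block_diag_submx ?addsmxSl ?addsmxSr.
rewrite block_mxEv col_mx_sub.
have -> : row_mx (A + X)%MS 0 = (A + X)%MS *m (row_mx 1%:M 0 : 'M[F]_(d1, d1 + d2)).
  by rewrite mul_mx_row mulmx1 mulmx0.
have -> : row_mx 0 (B + Y)%MS = (B + Y)%MS *m (row_mx 0 1%:M : 'M[F]_(d2, d1 + d2)).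
  by rewrite mul_mx_row mulmx1 mulmx0.
by rewrite !addsmxMr !addsmxS.
Qed.

Lemma sumsmx_block_diag (I : finType) (P : pred I) d1 d2
    (M : I -> 'M[F]_d1) (N : I -> 'M[F]_d2) :
  (\sum_(i | P i) block_mx (M i) 0 0 (N i) :=:
     block_mx (\sum_(i | P i) M i)%MS 0 0 (\sum_(i | P i) N i)%MS)%MS.
Proof.
elim/big_rec3: _ => [|i S X Y _ IH]; first by rewrite block_mx0.
exact: eqmx_trans (adds_eqmx (eqmx_refl _) IH) (addsmx_block_diag _ _ _ _).
Qed.

End BlockDiagonal.

Lemma mx_representable_muln n (f : {set 'I_n} -> nat) k :
  mx_representable f -> mx_representable (fun A => k * f A)%N.
Proof.
move=> [F [d [M fM]]]; exists F.
elim: k => [|k [d' [M' kfM]]].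
  by exists 0%N, (fun=> 0) => A; rewrite big1 ?mxrank0.
exists (d + d')%N, (fun i => block_mx (M i) 0 0 (M' i)) => A.
by rewrite sumsmx_block_diag rank_diag_block_mx fM kfM mulSn.
Qed.

Lemma mxrank_sumsmx_map (F K : fieldType) (phi : {rmorphism F -> K}) (I : finType)
    (P : pred I) d (M : I -> 'M[F]_d) :
  \rank (\sum_(i | P i) map_mx phi (M i))%MS = \rank (\sum_(i | P i) M i)%MS.
Proof.
suff -> : (\sum_(i | P i) map_mx phi (M i) :=: map_mx phi (\sum_(i | P i) M i)%MS)%MS.
  exact: mxrank_map.
elim/big_rec2: _ => [|i X Y _ IH]; first by rewrite map_mx0.
exact: eqmx_trans (adds_eqmx (eqmx_refl _) IH) (eqmx_sym (map_addsmx _ _ _)).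
Qed.

Lemma finField_ext_card_gt (F : finFieldType) (N : nat) :
  exists (L : finFieldType) (phi : {rmorphism F -> L}), (N < #|L|)%N.
Proof.
have [p p_pr p_char] := finPcharP F.
pose q := (p ^ N.+1)%N.
have N_lt_q : (N.+1 < q)%N by apply: ltn_expl; apply: prime_gt1.
have size_q (K : nzRingType) : size ('X^q - 'X : {poly K}) = q.+1.
  rewrite size_polyDl ?size_polyXn // size_polyN size_polyX.
  by move: N_lt_q; lia.
have nz_q : 'X^q - 'X != 0 :> {poly F} by rewrite -size_poly_eq0 size_q.
have [L0 [rs def_rs _]] := FinSplittingFieldFor nz_q.
pose L := FinFieldExtType L0; exists L, (in_alg L0).
move: def_rs; rewrite rmorphB rmorphXn /= map_polyX => def_rs.
have p_charL : p \in [pchar {poly L0}] by rewrite pchar_poly pchar_lalg.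
have sep_q : separable_poly ('X^q - 'X : {poly L0}).
  have q0 : q%:R = 0 :> {poly L0} by rewrite natrX (pcharf0 p_charL) expr0n.
  rewrite unlock derivB derivXn derivX -mulr_natr q0 mulr0 sub0r.
  rewrite -[-1](scaleN1r (1 : {poly L0})).
  by rewrite coprimepZr ?oppr_eq0 ?oner_eq0 // coprimep1.
have uniq_rs : uniq rs by rewrite -separable_prod_XsubC -(eqp_separable def_rs).
have size_rs : size rs = q.
  by have := eqp_size def_rs; rewrite size_q size_prod_XsubC => -[].
apply: leq_trans (ltnW N_lt_q) _.
rewrite -size_rs -(card_uniqP (uniq_rs : @uniq L rs)).
exact: max_card.
Qed.

Lemma leq_card_bigcup (I T : finType) (P : pred I) (B : I -> {set T}) :
  (#|\bigcup_(i | P i) B i| <= \sum_(i | P i) #|B i|)%N.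
Proof.
elim/big_rec2: _ => [|i x y _ IH]; first by rewrite cards0.
by apply: leq_trans (leq_card_setU _ _).1 _; rewrite leq_add2l.
Qed.

Lemma card_rV_submx (L : finFieldType) m d (U : 'M[L]_(m, d)) :
  #|[set u : 'rV[L]_d | (u <= U)%MS]| = (#|L| ^ \rank U)%N.
Proof.
pose f (x : 'rV[L]_(\rank U)) := x *m row_base U.
have f_inj : injective f by apply: row_free_inj; exact: row_base_free.
have -> : [set u : 'rV[L]_d | (u <= U)%MS] = f @: [set: 'rV[L]_(\rank U)].
  apply/setP => u; rewrite inE -(eq_row_base U); apply/idP/imsetP.
    by move=> /submxP[x ->]; exists x; rewrite ?inE.
  by move=> [x _ ->]; rewrite submxMl.
by rewrite card_imset // cardsT card_mx mul1n.
Qed.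

(* A union of fewer than [#|L|] subspaces of dimension [< r] cannot cover a
   subspace of dimension [r]: it has at most [#|I| * #|L|^(r-1) < #|L|^r] vectors. *)
Lemma exists_rV_avoid_submx (L : finFieldType) (I : finType) m d
    (U : 'M[L]_(m, d)) (V : I -> 'M[L]_d) :
  (#|I| < #|L|)%N ->
  exists2 w : 'rV[L]_d, (w <= U)%MS &
    forall i, (\rank (V i) < \rank U)%N -> ~~ (w <= V i)%MS.
Proof.
move=> card_I; set r := \rank U.
have [r0|r_gt0] := posnP r; first by exists 0 => [|i]; rewrite ?sub0mx ?r0.
have L_gt0 : (0 < #|L|)%N by apply/card_gt0P; exists 0.
pose small i := (\rank (V i) < r)%N.
pose bad := \bigcup_(i | small i) [set u : 'rV[L]_d | (u <= V i)%MS].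
have card_bad : (#|bad| < #|[set u : 'rV[L]_d | (u <= U)%MS]|)%N.
  apply: leq_ltn_trans (leq_card_bigcup _ _) _.
  apply: (@leq_ltn_trans (\sum_(i : I) #|L| ^ r.-1)%N).
    rewrite big_mkcond /=; apply: leq_sum => i _; case: ifP => // small_i.
    by rewrite card_rV_submx leq_pexp2l // -ltnS (prednK r_gt0).
  rewrite sum_nat_const card_rV_submx -/r -{2}(prednK r_gt0) expnS.
  by rewrite ltn_pmul2r // expn_gt0 L_gt0.
have /subsetPn[w] : ~~ ([set u : 'rV[L]_d | (u <= U)%MS] \subset bad).
  by apply: contraL card_bad => /subset_leq_card; rewrite leqNgt.
rewrite inE => wU w_bad; exists w => // i small_i.
by apply: contra w_bad => wV; apply/bigcupP; exists i; rewrite ?inE.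
Qed.

Lemma mxrank_mul_cokermx_rV (F : fieldType) m d (U : 'M[F]_(m, d)) (w : 'rV[F]_d) :
  w != 0 -> \rank (U *m cokermx w) = (\rank U - (w <= U)%MS)%N.
Proof.
move=> w_neq0; have ker_w : (kermx (cokermx w) :=: w)%MS.
  apply/eqmxP; rewrite submxE -sub_kermx submx_refl.
  by rewrite sub_kermx -submxE submx_refl.
rewrite -[in RHS](mxrank_mul_ker U (cokermx w)) (cap_eqmx (eqmx_refl U) ker_w).
have [wU|wNU] := boolP (w <= U)%MS.
  by rewrite (capmx_idPr wU) rank_rV w_neq0 addnK.
have : (\rank (U :&: w) < \rank w)%N.
  rewrite (ltn_leqif (mxrank_leqif_eq (capmxSr U w))).
  by apply: contra wNU => /eqmxP eq_w; rewrite -eq_w capmxSl.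
by rewrite rank_rV w_neq0 ltnS leqn0 => /eqP ->; rewrite addn0 subn0.
Qed.

Section Truncation.
Variables (L : finFieldType) (n : nat).
Hypothesis card_L : (#|{set 'I_n}| < #|L|)%N.
Local Notation span M A := (\sum_(i in (A : {set 'I_n})) M i)%MS.

Lemma span_subT d (M : 'I_n -> 'M[L]_d) (A : {set 'I_n}) :
  (span M A <= span M [set: 'I_n])%MS.
Proof. by apply/sumsmx_subP => i _; rewrite (sumsmx_sup i) ?inE. Qed.

(* Project along a vector of the total span that lies in no span of smaller rank. *)
Lemma trunc1_exists d (M : 'I_n -> 'M[L]_d) :
  exists M' : 'I_n -> 'M[L]_d, forall A : {set 'I_n},
    \rank (span M' A) = minn (\rank (span M A)) (\rank (span M [set: 'I_n])).-1.
Proof.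
set r := \rank (span M [set: 'I_n]).
have le_r (A : {set 'I_n}) : (\rank (span M A) <= r)%N := mxrankS (span_subT M A).
have [r0|r_gt0] := posnP r.
  by exists M => A; have := le_r A; rewrite r0; lia.
have [w wT w_avoid] :=
  exists_rV_avoid_submx (span M [set: 'I_n]) (fun A => span M A) card_L.
have w_neq0 : w != 0.
  have := w_avoid finset.set0; rewrite big_set0 mxrank0 => /(_ r_gt0).
  by apply: contraNneq => ->; rewrite sub0mx.
exists (fun i => M i *m cokermx w) => A.
rewrite -sumsmxMr mxrank_mul_cokermx_rV //.
have [wA|wNA] := boolP (w <= span M A)%MS.
  have rA : \rank (span M A) = r.
    by apply/eqP; rewrite eqn_leq le_r leqNgt; apply: contraL wA; apply: w_avoid.
  by rewrite rA; lia.
have rA : (\rank (span M A) < r)%N.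
  rewrite (ltn_leqif (mxrank_leqif_eq (span_subT M A))).
  by apply: contra wNA => /eqmxP ->.
by move: rA; lia.
Qed.

Lemma trunc_subn_exists d (M : 'I_n -> 'M[L]_d) j :
  exists M' : 'I_n -> 'M[L]_d, forall A : {set 'I_n},
    \rank (span M' A) = minn (\rank (span M A)) (\rank (span M [set: 'I_n]) - j).
Proof.
have le_r (A : {set 'I_n}) := mxrankS (span_subT M A).
elim: j => [|j [M1 M1E]]; first by exists M => A; have := le_r A; lia.
have [M2 M2E] := trunc1_exists M1.
by exists M2 => A; rewrite M2E !M1E; have := le_r A; lia.
Qed.

Lemma trunc_exists d (M : 'I_n -> 'M[L]_d) t :
  exists M' : 'I_n -> 'M[L]_d, forall A : {set 'I_n},
    \rank (span M' A) = minn (\rank (span M A)) t.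
Proof.
have [M' M'E] := trunc_subn_exists M (\rank (span M [set: 'I_n]) - t).
by exists M' => A; rewrite M'E; have := mxrankS (span_subT M A); lia.
Qed.

End Truncation.

Lemma mx_representable_trunc n (f : {set 'I_n} -> nat) t :
  mx_representable f -> mx_representable (fun A => minn (f A) t).
Proof.
move=> [F [d [M fM]]].
have [L [phi card_L]] := finField_ext_card_gt F #|{set 'I_n}|.
have [M' M'E] := trunc_exists card_L (fun i => map_mx phi (M i)) t.
by exists L, d, M' => A; rewrite M'E mxrank_sumsmx_map fM.
Qed.

Section Limits.
Local Open Scope classical_set_scope.
Import numFieldNormedType.Exports.
Context {R : realType}.

Lemma cvg_min {T : Type} (F : set_system T) {FF : Filter F} (u v : T -> R) (a b : R) :
  u @ F --> a -> v @ F --> b -> (fun x => Num.min (u x) (v x)) @ F --> Num.min a b.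
Proof.
move=> ua vb; under eq_fun do rewrite minr_absE; rewrite minr_absE.
apply: cvgMr_tmp; apply: cvgB; first exact: cvgD.
by apply: cvg_norm; apply: cvgB.
Qed.

Lemma cvg_mulr_truncn (a : nat -> R) (t : R) :
  0 <= t -> (forall k, 0 < a k) -> a @ \oo --> 0 ->
  (fun k => a k * (Num.truncn (t / a k))%:R) @ \oo --> t.
Proof.
move=> t_ge0 a_gt0 a0.
apply: (@squeeze_cvgr _ _ _ _ (fun k => t - a k) (cst t)
  (fun k => a k * (Num.truncn (t / a k))%:R)); last exact: cvg_cst.
  apply: nearW => k; have := truncn_itv (divr_ge0 t_ge0 (ltW (a_gt0 k))).
  rewrite ler_pdivlMr // ltr_pdivrMr // -natr1 mulrDl mul1r => /andP[le lt].
  by rewrite /cst mulrC le andbT lerBlDr ltW.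
by rewrite -[X in _ --> X]subr0; apply: cvgB => //; exact: cvg_cst.
Qed.

Lemma exists_divn_cvg0 (c : nat -> R) : (forall k, 0 <= c k) ->
  exists2 m : nat -> nat, (forall k, 0 < m k)%N &
    (fun k => c k / (m k)%:R) @ \oo --> 0.
Proof.
move=> c_ge0; pose x k := c k * k.+1%:R.
have x_ge0 k : 0 <= x k by rewrite mulr_ge0.
have m_gt0 k : (0 < Num.bound (x k))%N.
  by rewrite -(ltr_nat R); apply: le_lt_trans (x_ge0 k) (archi_boundP (x_ge0 k)).
exists (fun k => Num.bound (x k)) => //.
apply: (@squeeze_cvgr _ _ _ _ (cst 0) harmonic); [|exact: cvg_cst|exact: cvg_harmonic].
apply: nearW => k; rewrite divr_ge0 //=.
rewrite ler_pdivrMr ?ltr0n // mulrC ler_pdivlMr //.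
exact: ltW (archi_boundP (x_ge0 k)).
Qed.

End Limits.

Theorem theorem3 (R : realType) (n : nat) (h : {set 'I_n} -> R) (eps : R) :
  polymatroid h -> almost_representable h ->
  0 <= eps -> eps <= h [set: 'I_n] ->
  almost_representable (fun A : {set 'I_n} => Num.min (h A) (h [set: 'I_n] - eps)).
Proof.
move=> _ [g [c [g_rep c_gt0 cg_h]]] _ eps_le_hX.
set t := h [set: 'I_n] - eps; have t_ge0 : 0 <= t by rewrite subr_ge0.
have [f f_rep_g] := choice (fun k => representable_mx (g_rep k)).
have [m m_gt0 cm0] := exists_divn_cvg0 (fun k => ltW (c_gt0 k)).
pose a k := c k / (m k)%:R.
have a_gt0 k : 0 < a k by rewrite divr_gt0 ?ltr0n.
pose r k := Num.truncn (t / a k).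
exists (fun k A => (minn (m k * f k A) (r k))%:R), a; split => // [k|A].
  apply/mx_representable_representable/mx_representable_trunc.
  exact/mx_representable_muln/(f_rep_g k).1.
have aE k :
    a k * (minn (m k * f k A) (r k))%:R = Num.min (c k * g k A) (a k * (r k)%:R).
  rewrite -[minn _ _]/(Order.min _ _) natr_min minr_pMr ?(ltW (a_gt0 k)) //.
  by rewrite (f_rep_g k).2 natrM mulrA divfK // gt_eqF ?ltr0n.
under eq_fun do rewrite aE.
exact: cvg_min (cg_h A) (cvg_mulr_truncn t_ge0 a_gt0 cm0).
Qed.
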